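(* Let $\widetilde\nabla$ be the canonical snm-connection on $\mathbb R^3$ determined by $\mathsf C=\partial_z$. Let $c\in\mathbb R\setminus\{0,\tfrac12\}$ and let $$u(x,y)=-\frac1c\log\cos(cx)-\frac{2c-1}{c}\log\cos\Big(\frac{cy}{2c-1}\Big)$$ on a connected open set $\Omega\subset\mathbb R^2$ on which $\cos(cx)>0$ and $\cos\big(cy/(2c-1)\big)>0$. Then the graph $M=\{(x,y,u(x,y)):(x,y)\in\Omega\}$ satisfies $K(p)=\widetilde K(T_pM)$ at every point $p\in M$ (equivalently, $G=\langle \partial_z,N\rangle H$ on $M$, where $N$ is the upward unit normal).
   Context: Let $\langle\cdot,\cdot\rangle$ be the Euclidean metric on $\mathbb R^3$ and $\widetilde\nabla^0$ its Levi-Civita connection (the ordinary directional derivative). Given a smooth vector field $\mathsf C$ on $\mathbb R^3$, the semi-symmetric non-metric connection (snm-connection) determined by $\mathsf C$ is $\widetilde\nabla_XY=\widetilde\nabla^0_XY+\langle \mathsf C,Y\rangle X$. Its curvature tensor is $\widetilde R(X,Y)Z=\widetilde\nabla_X\widetilde\nabla_YZ-\widetilde\nabla_Y\widetilde\nabla_XZ-\widetilde\nabla_{[X,Y]}Z$. For a $2$-dimensional subspace $\pi\subset T_p\mathbb R^3$ with orthonormal basis $\{e_1,e_2\}$, its sectional curvature with respect to $\widetilde\nabla$ is $\widetilde K(\pi)=\frac12\big(\langle\widetilde R(e_1,e_2)e_2,e_1\rangle+\langle\widetilde R(e_2,e_1)e_1,e_2\rangle\big)$. For a surface $M$ immersed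 in $\mathbb R^3$, the induced connection is $\nabla_XY=(\widetilde\nabla_XY)^{\top}$ for tangent vector fields $X,Y$, with curvature tensor $R$ defined by the same formula as $\widetilde R$, and the sectional curvature of $M$ with respect to $\widetilde\nabla$ at $p$ is $K(p)=\frac12\big(\langle R(e_1,e_2)e_2,e_1\rangle+\langle R(e_2,e_1)e_1,e_2\rangle\big)$ for an orthonormal basis $\{e_1,e_2\}$ of $T_pM$. $G$ and $H$ denote the Gaussian and mean curvature (one half the trace of the shape operator for the second fundamental form $h(X,Y)=\langle\widetilde\nabla^0_XY,N\rangle$). *)

From Stdlib Require Import Reals.
From Coquelicot Require Import Coquelicot.
Open Scope R_scope.

Definition V3 : Type := (R * R * R)%type.
Definition v1 (v : V3) : R := fst (fst v).
Definition v2 (v : V3) : R := snd (fst v).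
Definition v3 (v : V3) : R := snd v.
Definition mkV (a b c : R) : V3 := (a, b, c).
Definition vadd (v w : V3) : V3 := mkV (v1 v + v1 w) (v2 v + v2 w) (v3 v + v3 w).
Definition vscal (k : R) (v : V3) : V3 := mkV (k * v1 v) (k * v2 v) (k * v3 v).
Definition vsub (v w : V3) : V3 := vadd v (vscal (-1) w).
Definition dot (v w : V3) : R := v1 v * v1 w + v2 v * v2 w + v3 v * v3 w.

Definition vderive (g : R -> V3) (t : R) : V3 :=
  mkV (Derive (fun s => v1 (g s)) t) (Derive (fun s => v2 (g s)) t)
      (Derive (fun s => v3 (g s)) t).

Definition ez : V3 := mkV 0 0 1.

Definition nabla0 (X Y : V3 -> V3) (p : V3) : V3 :=
  vderive (fun t => Y (vadd p (vscal t (X p)))) 0.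
Definition snm (C : V3) (X Y : V3 -> V3) (p : V3) : V3 :=
  vadd (nabla0 X Y p) (vscal (dot C (Y p)) (X p)).
Definition lie3 (X Y : V3 -> V3) (p : V3) : V3 := vsub (nabla0 X Y p) (nabla0 Y X p).
Definition Rtilde (C : V3) (X Y Z : V3 -> V3) (p : V3) : V3 :=
  vsub (vsub (snm C X (snm C Y Z) p) (snm C Y (snm C X Z) p)) (snm C (lie3 X Y) Z p).
Definition cstV (e : V3) : V3 -> V3 := fun _ => e.
Definition Ktilde (C : V3) (p e1 e2 : V3) : R :=
  / 2 * (dot (Rtilde C (cstV e1) (cstV e2) (cstV e2) p) e1
         + dot (Rtilde C (cstV e2) (cstV e1) (cstV e1) p) e2).

(** Points of M are parametrized by (x,y); vector fields along M are
    maps R -> R -> V3 (value at the point (x,y,u(x,y))). *)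
Definition graph (u : R -> R -> R) (x y : R) : V3 := mkV x y (u x y).
Definition pux (u : R -> R -> R) (x y : R) : R := Derive (fun t => u t y) x.
Definition puy (u : R -> R -> R) (x y : R) : R := Derive (fun t => u x t) y.
Definition normal (u : R -> R -> R) (x y : R) : V3 :=
  vscal (/ sqrt (1 + pux u x y ^ 2 + puy u x y ^ 2)) (mkV (- pux u x y) (- puy u x y) 1).
Definition tangent (u : R -> R -> R) (x y : R) (v : V3) : Prop := dot v (normal u x y) = 0.
Definition tproj (u : R -> R -> R) (x y : R) (v : V3) : V3 :=
  vsub v (vscal (dot v (normal u x y)) (normal u x y)).
(** Ambient directional derivative of a field W along M in the direction of a
    tangent field Z: a tangent vector (a,b,c) to the graph is the image of
    the parameter direction (a,b), so (nabla0_Z W) = a dW/dx + b dW/dy. *)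
Definition DM (Z W : R -> R -> V3) (x y : R) : V3 :=
  vadd (vscal (v1 (Z x y)) (vderive (fun t => W t y) x))
       (vscal (v2 (Z x y)) (vderive (fun t => W x t) y)).
Definition nablaM (u : R -> R -> R) (C : V3) (Z W : R -> R -> V3) (x y : R) : V3 :=
  tproj u x y (vadd (DM Z W x y) (vscal (dot C (W x y)) (Z x y))).
Definition lieM (Z W : R -> R -> V3) (x y : R) : V3 := vsub (DM Z W x y) (DM W Z x y).
Definition RM (u : R -> R -> R) (C : V3) (Z W V : R -> R -> V3) (x y : R) : V3 :=
  vsub (vsub (nablaM u C Z (nablaM u C W V) x y) (nablaM u C W (nablaM u C Z V) x y))
       (nablaM u C (lieM Z W) V x y).
(** tangent extension along M of a tangent vector e at (x0,y0): the tangent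
    field with the same (constant) parameter components as e. *)
Definition text (u : R -> R -> R) (e : V3) : R -> R -> V3 :=
  fun x y => mkV (v1 e) (v2 e) (v1 e * pux u x y + v2 e * puy u x y).
Definition KM (u : R -> R -> R) (C : V3) (x y : R) (e1 e2 : V3) : R :=
  / 2 * (dot (RM u C (text u e1) (text u e2) (text u e2) x y) e1
         + dot (RM u C (text u e2) (text u e1) (text u e1) x y) e2).

Definition orthonormal (e1 e2 : V3) : Prop :=
  dot e1 e1 = 1 /\ dot e2 e2 = 1 /\ dot e1 e2 = 0.

Definition open2 (U : R -> R -> Prop) : Prop :=
  forall x y, U x y -> exists eps, 0 < eps /\
    forall x' y', Rabs (x' - x) < eps -> Rabs (y' - y) < eps -> U x' y'.
Definition connected2 (O : R -> R -> Prop) : Prop :=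
  ~ exists U V : R -> R -> Prop, open2 U /\ open2 V /\
      (forall x y, O x y -> U x y \/ V x y) /\
      (exists x y, O x y /\ U x y) /\ (exists x y, O x y /\ V x y) /\
      (forall x y, O x y -> U x y -> V x y -> False).

Definition usol (c : R) (x y : R) : R :=
  - (1 / c) * ln (cos (c * x)) - ((2 * c - 1) / c) * ln (cos (c * y / (2 * c - 1))).

(* Where u_x = f(x) and u_y = g(y) with f' = alpha (1 + f^2) and g' = beta (1 + g^2), the
   induced connection in parameter coordinates only involves the slopes p = f(x), q = g(y), and
   a direct computation gives K = (p^2 + q^2 + (2 alpha beta - alpha - beta)(1+p^2)(1+q^2)/S) / (2S)
   with S = 1 + p^2 + q^2 (the parameter components of an orthonormal tangent basis satisfy
   (a1 b2 - a2 b1)^2 = 1/S).  On the other hand, for constant fields R~(X,Y)Z = <C,Z>(<C,Y>X - <C,X>Y), so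
   K~(T_pM) = (<e_z,e1>^2 + <e_z,e2>^2)/2 = (p^2 + q^2)/(2S).  Hence K = K~ exactly when
   2 alpha beta = alpha + beta, which is G = <C,N> H.  The given u has f = tan(cx),
   g = tan(cy/(2c-1)), alpha = c, beta = c/(2c-1). *)

From Stdlib Require Import Reals Lra Psatz.
From Coquelicot Require Import Coquelicot.
Open Scope R_scope.

(* The tangent vector a d/dx + b d/dy of a graph whose slopes at the point are p and q. *)
Definition tvec (p q a b : R) : V3 := mkV a b (a * p + b * q).

Ltac vsimp := unfold ez, tvec, vsub, vadd, vscal, dot, mkV, v1, v2, v3; cbn [fst snd].

Lemma V3_ext (v w : V3) : v1 v = v1 w -> v2 v = v2 w -> v3 v = v3 w -> v = w.
Proof.
  destruct v as [[a b] c], w as [[a' b'] c']; unfold v1, v2, v3; cbn.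
  intros -> -> ->; reflexivity.
Qed.

Lemma tvec_sub p q a b a' b' :
  vsub (tvec p q a b) (tvec p q a' b') = tvec p q (a - a') (b - b').
Proof. apply V3_ext; vsimp; ring. Qed.

Lemma vsub_0r v : vsub v (mkV 0 0 0) = v.
Proof. destruct v as [[a b] c]; apply V3_ext; vsimp; ring. Qed.

Lemma dot_tvec p q a b a' b' :
  dot (tvec p q a b) (tvec p q a' b') = a * a' + b * b' + (a * p + b * q) * (a' * p + b' * q).
Proof. vsimp; ring. Qed.

Lemma dot_ez_tvec p q a b : dot ez (tvec p q a b) = a * p + b * q.
Proof. vsimp; ring. Qed.

Lemma slope_norm_pos p q : 0 < 1 + p ^ 2 + q ^ 2.
Proof. nra. Qed.

Lemma tangent_tvec u x y v :
  tangent u x y v -> v = tvec (pux u x y) (puy u x y) (v1 v) (v2 v).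
Proof.
  unfold tangent, normal; intros H.
  set (P := pux u x y) in *; set (Q := puy u x y) in *.
  set (r := sqrt (1 + P ^ 2 + Q ^ 2)) in H.
  assert (Hr : 0 < r) by apply sqrt_lt_R0, slope_norm_pos.
  destruct v as [[a b] z]; unfold dot, vscal, mkV, v1, v2, v3 in H; cbn in H.
  assert (Hz : / r * (z - (a * P + b * Q)) = 0) by (rewrite <- H; ring).
  apply Rmult_integral in Hz as [Hz | Hz].
  - exfalso; apply (Rinv_neq_0_compat r); lra.
  - apply V3_ext; vsimp; lra.
Qed.

Lemma vscal_dot_vscal k v n :
  vscal (dot v (vscal k n)) (vscal k n) = vscal (k * k * dot v n) n.
Proof. apply V3_ext; vsimp; ring. Qed.

Lemma tproj_tvec u x y v :
  tproj u x y v =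
  let P := pux u x y in let Q := puy u x y in
  let d := (v3 v - P * v1 v - Q * v2 v) / (1 + P ^ 2 + Q ^ 2) in
  tvec P Q (v1 v + d * P) (v2 v + d * Q).
Proof.
  unfold tproj, normal; cbv zeta; rewrite vscal_dot_vscal.
  set (P := pux u x y); set (Q := puy u x y).
  assert (HS := slope_norm_pos P Q).
  rewrite <- Rinv_mult, sqrt_sqrt by lra.
  destruct v as [[a b] z]; apply V3_ext; vsimp; field; lra.
Qed.

Lemma nablaM_zero u C (Z W : R -> R -> V3) x y :
  Z x y = mkV 0 0 0 -> nablaM u C Z W x y = mkV 0 0 0.
Proof.
  intros HZ; unfold nablaM, tproj, DM; rewrite HZ; apply V3_ext; vsimp; ring.
Qed.

Lemma vderive_loc (W : R -> V3) t A B C dA dB dC :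
  locally t (fun r => W r = mkV (A r) (B r) (C r)) ->
  is_derive A t dA -> is_derive B t dB -> is_derive C t dC ->
  vderive W t = mkV dA dB dC.
Proof.
  intros HW HA HB HC; unfold vderive; apply V3_ext; vsimp.
  - rewrite (Derive_ext_loc _ A); [now apply is_derive_unique |].
    apply (filter_imp _ _ (fun r Hr => f_equal v1 Hr) HW).
  - rewrite (Derive_ext_loc _ B); [now apply is_derive_unique |].
    apply (filter_imp _ _ (fun r Hr => f_equal v2 Hr) HW).
  - rewrite (Derive_ext_loc _ C); [now apply is_derive_unique |].
    apply (filter_imp _ _ (fun r Hr => f_equal v3 Hr) HW).
Qed.

Lemma is_derive_mul_add (A P B Q : R -> R) t dA dP dB dQ l :
  l = dA * P t + A t * dP + (dB * Q t + B t * dQ) ->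
  is_derive A t dA -> is_derive P t dP -> is_derive B t dB -> is_derive Q t dQ ->
  is_derive (fun r => A r * P r + B r * Q r) t l.
Proof.
  intros -> HA HP HB HQ.
  apply (is_derive_plus (fun r => A r * P r) (fun r => B r * Q r));
    apply (is_derive_mult (K := R_AbsRing)); auto; intros; apply Rmult_comm.
Qed.

Lemma open2_locally_x D x y : open2 D -> D x y -> locally x (fun t => D t y).
Proof.
  intros HD Hxy; destruct (HD x y Hxy) as [eps [Heps Hball]].
  exists (mkposreal eps Heps); intros t Ht; apply Hball; [exact Ht |].
  rewrite Rminus_diag, Rabs_R0; exact Heps.
Qed.

Lemma open2_locally_y D x y : open2 D -> D x y -> locally y (fun t => D x t).
Proof.
  intros HD Hxy; destruct (HD x y Hxy) as [eps [Heps Hball]].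
  exists (mkposreal eps Heps); intros t Ht; apply Hball; [| exact Ht].
  rewrite Rminus_diag, Rabs_R0; exact Heps.
Qed.

Lemma vderive_const (e : V3) t : vderive (fun _ => e) t = mkV 0 0 0.
Proof. unfold vderive; rewrite !Derive_const; reflexivity. Qed.

Lemma vadd_0l v : vadd (mkV 0 0 0) v = v.
Proof. destruct v as [[a b] c]; apply V3_ext; vsimp; ring. Qed.

Lemma Rtilde_cst C e1 e2 e3 P :
  Rtilde C (cstV e1) (cstV e2) (cstV e3) P =
  vscal (dot C e3) (vsub (vscal (dot C e2) e1) (vscal (dot C e1) e2)).
Proof.
  unfold Rtilde, snm, lie3, nabla0, cstV; cbv beta.
  repeat rewrite vderive_const; rewrite !vadd_0l.
  destruct C as [[c1 c2] c3], e1 as [[a1 b1] z1], e2 as [[a2 b2] z2], e3 as [[a3 b3] z3].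
  apply V3_ext; vsimp; ring.
Qed.

Lemma Ktilde_orthonormal C P e1 e2 :
  orthonormal e1 e2 -> Ktilde C P e1 e2 = (dot C e1 ^ 2 + dot C e2 ^ 2) / 2.
Proof.
  intros [H11 [H22 H12]]; unfold Ktilde; rewrite !Rtilde_cst.
  assert (H21 : dot e2 e1 = 0) by (rewrite <- H12; unfold dot; ring).
  transitivity (/ 2 * (dot C e2 * (dot C e2 * dot e1 e1 - dot C e1 * dot e2 e1)
                       + dot C e1 * (dot C e1 * dot e2 e2 - dot C e2 * dot e1 e2))).
  - destruct C as [[c1 c2] c3], e1 as [[a1 b1] z1], e2 as [[a2 b2] z2]; vsimp; ring.
  - rewrite H11, H22, H12, H21; field.
Qed.

Lemma orthonormal_tvec_heights p q a1 b1 a2 b2 :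
  orthonormal (tvec p q a1 b1) (tvec p q a2 b2) ->
  (a1 * p + b1 * q) ^ 2 + (a2 * p + b2 * q) ^ 2 = (a1 * b2 - a2 * b1) ^ 2 * (p ^ 2 + q ^ 2).
Proof.
  unfold orthonormal; rewrite !dot_tvec; intros [H11 [H22 H12]].
  set (z1 := a1 * p + b1 * q) in *; set (z2 := a2 * p + b2 * q) in *.
  assert (Id : z1 ^ 2 + z2 ^ 2 - (a1 * b2 - a2 * b1) ^ 2 * (p ^ 2 + q ^ 2) =
    - (z2 ^ 2 * (a1 * a1 + b1 * b1 + z1 * z1 - 1) - 2 * z1 * z2 * (a1 * a2 + b1 * b2 + z1 * z2)
       + z1 ^ 2 * (a2 * a2 + b2 * b2 + z2 * z2 - 1))) by (unfold z1, z2; ring).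
  rewrite H11, H22, H12 in Id; lra.
Qed.

Section RiccatiGraph.

Variables (u : R -> R -> R) (D : R -> R -> Prop) (f g : R -> R) (alpha beta : R).

(* <e_z, N> h(X, Y) for X = (a, b), Y = (A, B): here u_xx = alpha (1 + p^2), u_yy = beta (1 + q^2),
   u_xy = 0 and <e_z, N> = 1 / sqrt S. *)
Definition sff (p q a b A B : R) : R :=
  (alpha * a * A * (1 + p ^ 2) + beta * b * B * (1 + q ^ 2)) / (1 + p ^ 2 + q ^ 2).

(* nabla_X Y = X(Y) + (gam1, gam2)(X, Y) in parameter coordinates: sff (p, q) comes from projecting
   (a A u_xx + b B u_yy) e_z onto the tangent plane, (A p + B q)(a, b) is the snm term <C,Y> X. *)
Definition gam1 (p q a b A B : R) : R := sff p q a b A B * p + (A * p + B * q) * a.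
Definition gam2 (p q a b A B : R) : R := sff p q a b A B * q + (A * p + B * q) * b.

Definition sff_p (p q a b A B : R) : R :=
  2 * p * (alpha * a * A - sff p q a b A B) / (1 + p ^ 2 + q ^ 2).
Definition sff_q (p q a b A B : R) : R :=
  2 * q * (beta * b * B - sff p q a b A B) / (1 + p ^ 2 + q ^ 2).

Ltac slope_derive :=
  intros; unfold gam1, gam2, sff_p, sff_q, sff; auto_derive;
  [apply Rgt_not_eq, slope_norm_pos | field; apply Rgt_not_eq, slope_norm_pos].

Lemma is_derive_gam1_p p q a b A B :
  is_derive (fun r => gam1 r q a b A B) p (sff_p p q a b A B * p + sff p q a b A B + A * a).
Proof. slope_derive. Qed.

Lemma is_derive_gam1_q p q a b A B :
  is_derive (fun r => gam1 p r a b A B) q (sff_q p q a b A B * p + B * a).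
Proof. slope_derive. Qed.

Lemma is_derive_gam2_p p q a b A B :
  is_derive (fun r => gam2 r q a b A B) p (sff_p p q a b A B * q + A * b).
Proof. slope_derive. Qed.

Lemma is_derive_gam2_q p q a b A B :
  is_derive (fun r => gam2 p r a b A B) q (sff_q p q a b A B * q + sff p q a b A B + B * b).
Proof. slope_derive. Qed.

Hypothesis D_open : open2 D.
Hypothesis pux_D : forall x y, D x y -> pux u x y = f x.
Hypothesis puy_D : forall x y, D x y -> puy u x y = g y.
Hypothesis f_riccati : forall x y, D x y -> is_derive f x (alpha * (1 + f x ^ 2)).
Hypothesis g_riccati : forall x y, D x y -> is_derive g y (beta * (1 + g y ^ 2)).

Lemma text_tvec e x y : D x y -> text u e x y = tvec (f x) (g y) (v1 e) (v2 e).
Proof. intros Hxy; unfold text, tvec; rewrite pux_D, puy_D by exact Hxy; reflexivity. Qed.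

Lemma vderive_tvec_x (Y : R -> R -> V3) (A B : R -> R -> R) x y Ax Bx :
  D x y -> (forall x' y', D x' y' -> Y x' y' = tvec (f x') (g y') (A x' y') (B x' y')) ->
  is_derive (fun t => A t y) x Ax -> is_derive (fun t => B t y) x Bx ->
  vderive (fun t => Y t y) x =
  mkV Ax Bx (Ax * f x + A x y * (alpha * (1 + f x ^ 2)) + Bx * g y).
Proof.
  intros Hxy HY HA HB.
  apply (vderive_loc _ _ (fun t => A t y) (fun t => B t y)
           (fun t => A t y * f t + B t y * g y)); auto.
  - apply (filter_imp (fun t => D t y)); [| now apply open2_locally_x].
    intros t Ht; rewrite (HY t y Ht); reflexivity.
  - apply (is_derive_mul_add _ f _ (fun _ => g y) x Ax (alpha * (1 + f x ^ 2)) Bx 0);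
      [ring | exact HA | exact (f_riccati x y Hxy) | exact HB | exact (is_derive_const _ _)].
Qed.

Lemma vderive_tvec_y (Y : R -> R -> V3) (A B : R -> R -> R) x y Ay By :
  D x y -> (forall x' y', D x' y' -> Y x' y' = tvec (f x') (g y') (A x' y') (B x' y')) ->
  is_derive (fun t => A x t) y Ay -> is_derive (fun t => B x t) y By ->
  vderive (fun t => Y x t) y =
  mkV Ay By (Ay * f x + By * g y + B x y * (beta * (1 + g y ^ 2))).
Proof.
  intros Hxy HY HA HB.
  apply (vderive_loc _ _ (fun t => A x t) (fun t => B x t)
           (fun t => A x t * f x + B x t * g t)); auto.
  - apply (filter_imp (fun t => D x t)); [| now apply open2_locally_y].
    intros t Ht; rewrite (HY x t Ht); reflexivity.
  - apply (is_derive_mul_add _ (fun _ => f x) _ g y Ay 0 By (beta * (1 + g y ^ 2)));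
      [ring | exact HA | exact (is_derive_const _ _) | exact HB | exact (g_riccati x y Hxy)].
Qed.

Lemma nablaM_tvec (Z Y : R -> R -> V3) (A B : R -> R -> R) x y a b Ax Ay Bx By :
  D x y -> Z x y = tvec (f x) (g y) a b ->
  (forall x' y', D x' y' -> Y x' y' = tvec (f x') (g y') (A x' y') (B x' y')) ->
  is_derive (fun t => A t y) x Ax -> is_derive (fun t => B t y) x Bx ->
  is_derive (fun t => A x t) y Ay -> is_derive (fun t => B x t) y By ->
  nablaM u ez Z Y x y =
  tvec (f x) (g y) (a * Ax + b * Ay + gam1 (f x) (g y) a b (A x y) (B x y))
                   (a * Bx + b * By + gam2 (f x) (g y) a b (A x y) (B x y)).
Proof.
  intros Hxy HZ HY HAx HBx HAy HBy; unfold nablaM, DM.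
  rewrite (vderive_tvec_x Y A B x y Ax Bx), (vderive_tvec_y Y A B x y Ay By), HZ, (HY x y)
    by assumption.
  rewrite tproj_tvec; cbv zeta; rewrite pux_D, puy_D by assumption.
  assert (HS := slope_norm_pos (f x) (g y)).
  unfold gam1, gam2, sff; apply V3_ext; vsimp; field; lra.
Qed.

Lemma nablaM_text e1 e2 x y : D x y ->
  nablaM u ez (text u e1) (text u e2) x y =
  tvec (f x) (g y) (gam1 (f x) (g y) (v1 e1) (v2 e1) (v1 e2) (v2 e2))
                   (gam2 (f x) (g y) (v1 e1) (v2 e1) (v1 e2) (v2 e2)).
Proof.
  intros Hxy.
  rewrite (nablaM_tvec _ _ (fun _ _ => v1 e2) (fun _ _ => v2 e2) x y (v1 e1) (v2 e1) 0 0 0 0);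
    auto using text_tvec, is_derive_const.
  f_equal; ring.
Qed.

Lemma is_derive_slope_x (F : R -> R -> R) dF x y : D x y ->
  is_derive (fun r => F r (g y)) (f x) dF ->
  is_derive (fun t => F (f t) (g y)) x (alpha * (1 + f x ^ 2) * dF).
Proof. intros Hxy HF; exact (is_derive_comp _ f x dF _ HF (f_riccati x y Hxy)). Qed.

Lemma is_derive_slope_y (F : R -> R -> R) dF x y : D x y ->
  is_derive (fun r => F (f x) r) (g y) dF ->
  is_derive (fun t => F (f x) (g t)) y (beta * (1 + g y ^ 2) * dF).
Proof. intros Hxy HF; exact (is_derive_comp _ g y dF _ HF (g_riccati x y Hxy)). Qed.

Definition nabla2_1 (p q a1 b1 a2 b2 a3 b3 : R) : R :=
  a1 * (alpha * (1 + p ^ 2)) * (sff_p p q a2 b2 a3 b3 * p + sff p q a2 b2 a3 b3 + a3 * a2)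
  + b1 * (beta * (1 + q ^ 2)) * (sff_q p q a2 b2 a3 b3 * p + b3 * a2)
  + gam1 p q a1 b1 (gam1 p q a2 b2 a3 b3) (gam2 p q a2 b2 a3 b3).

Definition nabla2_2 (p q a1 b1 a2 b2 a3 b3 : R) : R :=
  a1 * (alpha * (1 + p ^ 2)) * (sff_p p q a2 b2 a3 b3 * q + a3 * b2)
  + b1 * (beta * (1 + q ^ 2)) * (sff_q p q a2 b2 a3 b3 * q + sff p q a2 b2 a3 b3 + b3 * b2)
  + gam2 p q a1 b1 (gam1 p q a2 b2 a3 b3) (gam2 p q a2 b2 a3 b3).

Lemma nablaM_nablaM_text e1 e2 e3 x y : D x y ->
  nablaM u ez (text u e1) (nablaM u ez (text u e2) (text u e3)) x y =
  tvec (f x) (g y)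
    (nabla2_1 (f x) (g y) (v1 e1) (v2 e1) (v1 e2) (v2 e2) (v1 e3) (v2 e3))
    (nabla2_2 (f x) (g y) (v1 e1) (v2 e1) (v1 e2) (v2 e2) (v1 e3) (v2 e3)).
Proof.
  intros Hxy.
  set (a2 := v1 e2); set (b2 := v2 e2); set (a3 := v1 e3); set (b3 := v2 e3).
  set (p := f x); set (q := g y).
  rewrite (nablaM_tvec _ _ (fun x' y' => gam1 (f x') (g y') a2 b2 a3 b3)
             (fun x' y' => gam2 (f x') (g y') a2 b2 a3 b3) x y (v1 e1) (v2 e1)
             (alpha * (1 + p ^ 2) * (sff_p p q a2 b2 a3 b3 * p + sff p q a2 b2 a3 b3 + a3 * a2))
             (beta * (1 + q ^ 2) * (sff_q p q a2 b2 a3 b3 * p + b3 * a2))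
             (alpha * (1 + p ^ 2) * (sff_p p q a2 b2 a3 b3 * q + a3 * b2))
             (beta * (1 + q ^ 2) * (sff_q p q a2 b2 a3 b3 * q + sff p q a2 b2 a3 b3 + b3 * b2)));
    auto using text_tvec, nablaM_text.
  - unfold nabla2_1, nabla2_2, p, q; f_equal; ring.
  - apply (is_derive_slope_x (fun p q => gam1 p q a2 b2 a3 b3)), is_derive_gam1_p; assumption.
  - apply (is_derive_slope_x (fun p q => gam2 p q a2 b2 a3 b3)), is_derive_gam2_p; assumption.
  - apply (is_derive_slope_y (fun p q => gam1 p q a2 b2 a3 b3)), is_derive_gam1_q; assumption.
  - apply (is_derive_slope_y (fun p q => gam2 p q a2 b2 a3 b3)), is_derive_gam2_q; assumption.
Qed.

Lemma lieM_text e1 e2 x y : D x y -> lieM (text u e1) (text u e2) x y = mkV 0 0 0.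
Proof.
  intros Hxy.
  assert (Hx : forall e, vderive (fun t => text u e t y) x =
                         mkV 0 0 (0 * f x + v1 e * (alpha * (1 + f x ^ 2)) + 0 * g y)).
  { intro e; apply (vderive_tvec_x _ (fun _ _ => v1 e) (fun _ _ => v2 e));
      auto using text_tvec; exact (is_derive_const _ _). }
  assert (Hy : forall e, vderive (fun t => text u e x t) y =
                         mkV 0 0 (0 * f x + 0 * g y + v2 e * (beta * (1 + g y ^ 2)))).
  { intro e; apply (vderive_tvec_y _ (fun _ _ => v1 e) (fun _ _ => v2 e));
      auto using text_tvec; exact (is_derive_const _ _). }
  unfold lieM, DM; rewrite !Hx, !Hy, !text_tvec by assumption.
  apply V3_ext; vsimp; ring.
Qed.

Theorem KM_tvec x y a1 b1 a2 b2 : D x y ->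
  KM u ez x y (tvec (f x) (g y) a1 b1) (tvec (f x) (g y) a2 b2) =
  (a1 * b2 - a2 * b1) ^ 2 *
  (f x ^ 2 + g y ^ 2
   + (2 * alpha * beta - alpha - beta) * (1 + f x ^ 2) * (1 + g y ^ 2) / (1 + f x ^ 2 + g y ^ 2))
  / 2.
Proof.
  intros Hxy; unfold KM, RM.
  rewrite !(nablaM_zero _ _ _ _ _ _ (lieM_text _ _ _ _ Hxy)), !vsub_0r,
    !nablaM_nablaM_text, !tvec_sub, !dot_tvec by exact Hxy.
  cbn [v1 v2 tvec mkV fst snd].
  assert (HS := slope_norm_pos (f x) (g y)).
  set (p := f x) in *; set (q := g y) in *; clearbody p q.
  unfold nabla2_1, nabla2_2, gam1, gam2, sff_p, sff_q, sff; field; lra.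
Qed.
End RiccatiGraph.

Lemma is_derive_tan_scal k t :
  cos (k * t) <> 0 -> is_derive (fun s => tan (k * s)) t (k * (1 + tan (k * t) ^ 2)).
Proof. intros H; unfold tan; auto_derive; [exact H | field; exact H]. Qed.

Lemma pux_usol c x y : c <> 0 -> 0 < cos (c * x) -> pux (usol c) x y = tan (c * x).
Proof.
  intros Hc H; unfold pux, usol; apply is_derive_unique.
  auto_derive; [lra | unfold tan; field; lra].
Qed.

Lemma puy_usol c x y : c <> 0 -> 2 * c - 1 <> 0 -> 0 < cos (c * y / (2 * c - 1)) ->
  puy (usol c) x y = tan (c / (2 * c - 1) * y).
Proof.
  intros Hc H2 H; unfold puy, usol; apply is_derive_unique.
  replace (c / (2 * c - 1) * y) with (c * y / (2 * c - 1)) by (field; exact H2).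
  auto_derive; unfold Rdiv in *; [lra | unfold tan; field; repeat split; lra].
Qed.

Theorem mainTheorem4 :
  forall (c : R), c <> 0 -> c <> 1 / 2 ->
  forall (Omega : R -> R -> Prop), open2 Omega -> connected2 Omega ->
  (forall x y, Omega x y -> 0 < cos (c * x) /\ 0 < cos (c * y / (2 * c - 1))) ->
  forall x y, Omega x y ->
  forall e1 e2 : V3, orthonormal e1 e2 ->
    tangent (usol c) x y e1 -> tangent (usol c) x y e2 ->
    KM (usol c) ez x y e1 e2 = Ktilde ez (graph (usol c) x y) e1 e2.
Proof.
  intros c Hc Hc12 Omega HO _ Hcos x y Hxy e1 e2 Hon Ht1 Ht2.
  assert (H2 : 2 * c - 1 <> 0) by (contradict Hc12; lra).
  set (k := c / (2 * c - 1)).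
  assert (Ek : forall t, c * t / (2 * c - 1) = k * t) by (intro t; unfold k; field; exact H2).
  assert (Hux : forall x y, Omega x y -> pux (usol c) x y = tan (c * x))
    by (intros x' y' H; apply pux_usol; [exact Hc | apply (Hcos _ _ H)]).
  assert (Huy : forall x y, Omega x y -> puy (usol c) x y = tan (k * y))
    by (intros x' y' H; apply puy_usol; [exact Hc | exact H2 | apply (Hcos _ _ H)]).
  assert (Hf : forall x y, Omega x y -> is_derive (fun t => tan (c * t)) x (c * (1 + tan (c * x) ^ 2)))
    by (intros x' y' H; apply is_derive_tan_scal, Rgt_not_eq, (Hcos _ _ H)).
  assert (Hg : forall x y, Omega x y -> is_derive (fun t => tan (k * t)) y (k * (1 + tan (k * y) ^ 2)))
    by (intros x' y' H; apply is_derive_tan_scal, Rgt_not_eq; rewrite <- Ek; apply (Hcos _ _ H)).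
  rewrite (tangent_tvec _ _ _ _ Ht1), (tangent_tvec _ _ _ _ Ht2), Hux, Huy in Hon |- * by exact Hxy.
  rewrite (KM_tvec _ _ _ _ _ _ HO Hux Huy Hf Hg) by exact Hxy.
  rewrite Ktilde_orthonormal by exact Hon.
  rewrite !dot_ez_tvec, (orthonormal_tvec_heights _ _ _ _ _ _ Hon).
  (* 2 alpha beta = alpha + beta, i.e. G = <C,N> H *)
  assert (Hck : 2 * c * k - c - k = 0) by (unfold k; field; exact H2).
  rewrite Hck; field; apply Rgt_not_eq, slope_norm_pos.
Qed.
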